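(* Let $B$ be a complementary basis, $\beta=A_{\cdot B}^{-1}$ with rows $\beta_k$ indexed by $k\in B$, $i\in B$, $Q\in\mathbb R^{n\times d}$ and $q\in\mathbb R^n$. Let $$F(i)=\Big\{y\in\mathbb R^B:\ Q^T\beta^Ty=0,\ \sum_{j\in B\setminus\{i\}}y_j=1,\ y_j\ge0\ \forall j\in B\setminus\{i\}\Big\}$$ ($y_i$ free), and assume $F(i)\neq\emptyset$ and $\beta_iQ\neq0$. For $\epsilon>0$ let $$t^*(\epsilon)=\max\{t:\ (t,\theta)\in\mathbb R\times\mathbb R^d,\ -\beta_jQ\theta+t\le\beta_j(q+\boldsymbol\epsilon)\ \forall j\in B\setminus\{i\},\ -\beta_iQ\theta=\beta_i(q+\boldsymbol\epsilon)\},$$ and let $T^*$ be the lexicographic minimum of the set $\{(\beta[\,q\;\;I\,])^Ty:\ y\in F(i)\}\subseteq\mathbb R^{n+1}$ (which exists under these hypotheses). Then there exists $\delta>0$ with $t^*(\epsilon)>0$ for all $\epsilon\in(0,\delta)$ if and only if $T^*\succ0$.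
   Context: Let $M\in\mathbb R^{n\times n}$ and $A=[\,I\;\;-M\,]\in\mathbb R^{n\times 2n}$, columns indexed by $\{1,\dots,2n\}$; $A_{\cdot J}$ is the submatrix of columns indexed by $J$. Complementary index: $\bar i=i+n$ if $i\le n$, $\bar i=i-n$ if $i>n$. A complementary basis is a set $B$ with $|B|=n$, $A_{\cdot B}$ invertible, and $i\in B\Rightarrow\bar i\notin B$. $\boldsymbol\epsilon=(\epsilon,\epsilon^2,\dots,\epsilon^n)^T$; $[\,q\;\;I\,]$ is the $n\times(n+1)$ matrix with first column $q$ followed by the identity. A vector $a$ is lexico-positive ($a\succ0$) if $a\ne0$ and its first nonzero component is positive; $x\succ y$ iff $x-y\succ0$; the lexicographic minimum of a set $\{s^k\}$ is the element $s^j$ with $s^k\succeq s^j$ for all $k$. *)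

From HB Require Import structures.
From mathcomp Require Import all_boot all_order all_algebra.
Set Implicit Arguments. Unset Strict Implicit. Unset Printing Implicit Defensive.
Import Order.TTheory GRing.Theory Num.Theory.
Local Open Scope ring_scope.

Section Defs.
Variable R : realFieldType.

(* A = [ I  -M ] : n x 2n, columns indexed by 'I_(n + n):
   lshift n j  <-> column j+1 (j < n),  rshift n j <-> column n+j+1. *)
Definition Amat n (M : 'M[R]_n) : 'M[R]_(n, n + n) := row_mx 1%:M (- M).

(* complementary index: bar i = i + n if i <= n, i - n otherwise *)
Definition compl_idx n (k : 'I_(n + n)) : 'I_(n + n) :=
  match split k with
  | inl j => rshift n j
  | inr j => lshift n j
  end.

(* A complementary basis B, given by an enumeration b : 'I_n -> 'I_(n+n) of its
   elements (so |B| = n iff b injective); A_{.B} = colsub b (Amat M). *)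
Definition compl_basis n (M : 'M[R]_n) (b : 'I_n -> 'I_(n + n)) : Prop :=
  injective b /\ colsub b (Amat M) \in unitmx /\
  (forall p p' : 'I_n, b p' <> compl_idx (b p)).

(* beta = A_{.B}^{-1}; row p of beta is beta_{b p} *)
Definition betaB n (M : 'M[R]_n) (b : 'I_n -> 'I_(n + n)) : 'M[R]_n :=
  invmx (colsub b (Amat M)).

Definition epsvec n (e : R) : 'cV[R]_n := \col_(k < n) e ^+ k.+1.

Definition lexpos m (a : 'cV[R]_m) : Prop :=
  a != 0 /\
  (forall k : 'I_m, a k ord0 != 0 ->
     (forall j : 'I_m, (j < k)%N -> a j ord0 = 0) -> 0 < a k ord0).

Definition lexge m (x y : 'cV[R]_m) : Prop := x = y \/ lexpos (x - y).

Definition is_lexmin m (S : 'cV[R]_m -> Prop) (s : 'cV[R]_m) : Prop :=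
  S s /\ forall s', S s' -> lexge s' s.

Definition is_max (S : R -> Prop) (t : R) : Prop :=
  S t /\ forall s, S s -> s <= t.

(* F(i) : y in R^B (indexed by positions of B) *)
Definition Fset n d (beta : 'M[R]_n) (Q : 'M[R]_(n, d)) (i : 'I_n)
  (y : 'cV[R]_n) : Prop :=
  Q^T *m beta^T *m y = 0 /\
  \sum_(j < n | j != i) y j ord0 = 1 /\
  (forall j : 'I_n, j != i -> 0 <= y j ord0).

Definition tfeas n d (beta : 'M[R]_n) (Q : 'M[R]_(n, d)) (q : 'cV[R]_n)
  (i : 'I_n) (e : R) (t : R) : Prop :=
  exists theta : 'cV[R]_d,
    (forall j : 'I_n, j != i ->
       - (row j beta *m Q *m theta) ord0 ord0 + t
         <= (row j beta *m (q + epsvec n e)) ord0 ord0) /\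
    - (row i beta *m Q *m theta) ord0 ord0
      = (row i beta *m (q + epsvec n e)) ord0 ord0.

Definition Tset n d (beta : 'M[R]_n) (Q : 'M[R]_(n, d)) (q : 'cV[R]_n)
  (i : 'I_n) (v : 'cV[R]_(1 + n)) : Prop :=
  exists y, Fset beta Q i y /\ v = (beta *m row_mx q 1%:M)^T *m y.

End Defs.

(* F(i) is a polytope (its recession cone is trivial because
   beta_i Q != 0), and by linear programming duality t*(e) is the minimum over
   F(i) of the dual cost  y |-> beta (q + eps) . y.  The cost of y is the
   polynomial  sum_l (C y)_l e^l  with C = (beta [q I])^T, so t*(e) is the least
   of finitely many polynomials in e, one for each vertex of F(i), while T*, the
   lexicographic minimum of the C y, is the coefficient vector of one of them.
   A polynomial is positive on some interval (0, delta) iff its coefficient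
   vector is lexico-positive, and T* lies lexicographically below every C y. *)

From HB Require Import structures.
From mathcomp Require Import all_boot all_order all_algebra.
From mathcomp Require Import ring.
From Stdlib Require Import Classical.
Import Order.TTheory GRing.Theory Num.Theory.
Set Implicit Arguments. Unset Strict Implicit. Unset Printing Implicit Defensive.
Local Open Scope ring_scope.

Section FourierMotzkin.
Variable R : realFieldType.

Lemma separating_value (I : finType) (P1 P2 : pred I) (L U : I -> R) :
  (forall k l, P1 k -> P2 l -> L k <= U l) ->
  exists z, (forall k, P1 k -> L k <= z) /\ (forall l, P2 l -> z <= U l).
Proof.
move=> LU; case: (pickP P1) => [k0 Pk0|noL].
  have [k Pk maxk] := arg_maxP L Pk0.
  by exists (L k); split=> [k' /maxk|l /(LU _ _ Pk)].
case: (pickP P2) => [l0 Pl0|noU].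
  have [l Pl minl] := arg_minP U Pl0.
  by exists (U l); split=> [k'|l' /minl //]; rewrite noL.
by exists 0; split=> [k|l]; rewrite ?noL ?noU.
Qed.

Definition lin_feasible N (I : finType) (a : I -> nat -> R) (b : I -> R) :=
  exists x : nat -> R, forall k, \sum_(j < N) a k j * x j <= b k.

Definition farkas_certificate N (I : finType) (a : I -> nat -> R) (b : I -> R) :=
  exists l : I -> R, (forall k, 0 <= l k) /\
    (forall j, (j < N)%N -> \sum_k l k * a k j = 0) /\ \sum_k l k * b k < 0.

(* Fourier-Motzkin elimination of the last unknown x_N of a system in N + 1
   unknowns: keep the inequalities where x_N does not occur, and combine
   every inequality with a positive coefficient of x_N with every inequality
   with a negative one so that x_N cancels. *)
Section Elimination.
Variables (N : nat) (I : finType) (a : I -> nat -> R) (b : I -> R).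

Definition opposite_signs (p q : I) := (0 < a p N) && (a q N < 0).

Definition fm_comb (f : I -> R) (k' : I + I * I) : R :=
  match k' with
  | inl k => if a k N == 0 then f k else 0
  | inr (p, q) =>
      if opposite_signs p q then - a q N * f p + a p N * f q else 0
  end.

Definition elim_a (k' : I + I * I) (j : nat) : R := fm_comb (fun k => a k j) k'.
Definition elim_b : I + I * I -> R := fm_comb b.

(* A solution of the eliminated system extends to one of the original system:
   the combined inequalities say exactly that the lower bounds on x_N lie
   below its upper bounds. *)
Lemma fm_feasible_lift : lin_feasible N elim_a elim_b -> lin_feasible N.+1 a b.
Proof.
case=> x' sol.
pose r k := b k - \sum_(j < N) a k j * x' j.
have r_zero k : a k N = 0 -> 0 <= r k.
  by move=> ak; move: (sol (inl k)); rewrite /elim_a /elim_b /= ak eqxx subr_ge0.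
have r_pair q p : a q N < 0 -> 0 < a p N -> r q / a q N <= r p / a p N.
  move=> aq ap; rewrite ler_ndivrMr // mulrAC ler_pdivrMr // -subr_ge0.
  move: (sol (inr (p, q))); rewrite /elim_a /elim_b /= /opposite_signs ap aq /=.
  under eq_bigr do rewrite mulrDl -!mulrA.
  rewrite big_split /= -!mulr_sumr => comb.
  have -> : r q * a p N - r p * a q N =
      (- a q N * b p + a p N * b q) - (- a q N * \sum_(j < N) a p j * x' j
                                       + a p N * \sum_(j < N) a q j * x' j).
    by rewrite /r; ring.
  by rewrite subr_ge0.
have [z [z_lo z_hi]] := separating_value (P1 := fun q => a q N < 0)
  (P2 := fun p => 0 < a p N) r_pair.
exists (fun j => if j == N then z else x' j) => k.
rewrite big_ord_recr /= eqxx.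
under eq_bigr => j _ do rewrite ltn_eqF //.
rewrite -lerBrDl -/(r k); case: (ltrgtP (a k N) 0) => ak.
- by move: (z_lo k ak); rewrite ler_ndivrMr // mulrC.
- by move: (z_hi k ak); rewrite ler_pdivlMr // mulrC.
- by rewrite ak mul0r; apply: r_zero.
Qed.

Definition lift_mult (l' : I + I * I -> R) (k : I) : R :=
  (if a k N == 0 then l' (inl k) else 0)
  + \sum_q (if opposite_signs k q then l' (inr (k, q)) * - a q N else 0)
  + \sum_p (if opposite_signs p k then l' (inr (p, k)) * a p N else 0).

Lemma lift_mult_comb (l' : I + I * I -> R) (f : I -> R) :
  \sum_k lift_mult l' k * f k = \sum_k' l' k' * fm_comb f k'.
Proof.
rewrite big_sumType /=.
have -> : \sum_(pq : I * I) l' (inr pq) * fm_comb f (inr pq) =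
  \sum_p \sum_q ((if opposite_signs p q then l' (inr (p, q)) * - a q N else 0) * f p
               + (if opposite_signs p q then l' (inr (p, q)) * a p N else 0) * f q).
  rewrite pair_big /=; apply: eq_bigr => -[p q] _ /=.
  by case: ifP => _; rewrite ?mulr0 ?mul0r ?addr0 // mulrDr !mulrA.
rewrite [X in _ = _ + X](eq_bigr _ (fun p _ => big_split _ _ _ _ _)) /= big_split /=.
rewrite [X in _ = _ + (_ + X)]exchange_big /=.
under eq_bigr do rewrite !mulrDl.
rewrite !big_split /= -!addrA; congr (_ + _).
  by apply: eq_bigr => k _; case: ifP; rewrite ?mul0r ?mulr0.
by congr (_ + _); apply: eq_bigr => k _; rewrite mulr_suml.
Qed.

(* A certificate for the eliminated system yields one for the original system;
   the coefficient of x_N vanishes since every combination cancels it. *)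
Lemma fm_certificate_lift :
  farkas_certificate N elim_a elim_b -> farkas_certificate N.+1 a b.
Proof.
case=> l' [l'_ge0 [l'_a l'_b]]; exists (lift_mult l'); split; last split.
- move=> k; rewrite !addr_ge0 //; first by case: ifP.
    apply: sumr_ge0 => q _; case: ifP => // /andP[_ aq].
    by rewrite mulr_ge0 // oppr_ge0 ltW.
  apply: sumr_ge0 => p _; case: ifP => // /andP[ap _].
  by rewrite mulr_ge0 // ltW.
- move=> j; rewrite ltnS leq_eqVlt => /orP[/eqP ->|jN]; last first.
    by rewrite (lift_mult_comb l' (fun k => a k j)); apply: l'_a.
  rewrite (lift_mult_comb l' (fun k => a k N)) big1 // => -[k|[p q]] _ /=.
    by case: ifP => [/eqP ->|]; rewrite mulr0.
  by case: ifP; rewrite ?mulr0 // mulNr [a p N * _]mulrC addNr mulr0.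
- by rewrite (lift_mult_comb l' b).
Qed.
End Elimination.

Theorem farkas N (I : finType) (a : I -> nat -> R) (b : I -> R) :
  ~ lin_feasible N a b -> farkas_certificate N a b.
Proof.
elim: N I a b => [|N IH] I a b infeas; last first.
  by apply: fm_certificate_lift; apply: IH => /fm_feasible_lift.
case: (pickP (fun k => b k < 0)) => [k bk|b_ge0]; last first.
  by case: infeas; exists (fun=> 0) => k; rewrite big_ord0 leNgt (b_ge0 k).
exists (fun k' => (k' == k)%:R); split=> [k'|]; first by rewrite ler0n.
split=> [//|]; rewrite (bigD1 k) //= eqxx mul1r big1 ?addr0 // => k' /negbTE ->.
by rewrite mul0r.
Qed.
End FourierMotzkin.

Section NearZero.
Variable R : realFieldType.

Definition near0 (P : R -> Prop) :=
  exists delta : R, 0 < delta /\ forall e, 0 < e -> e < delta -> P e.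

Lemma near0_and (P1 P2 : R -> Prop) :
  near0 P1 -> near0 P2 -> near0 (fun e => P1 e /\ P2 e).
Proof.
move=> [d1 [d1_gt0 P1d]] [d2 [d2_gt0 P2d]]; exists (Num.min d1 d2).
split=> [|e e_gt0]; first by rewrite lt_min d1_gt0.
by rewrite lt_min => /andP[ed1 ed2]; split; [apply: P1d | apply: P2d].
Qed.

Lemma near0_witness (P : R -> Prop) : near0 P -> exists e, P e.
Proof.
move=> [d [d_gt0 Pd]]; have [e_gt0 e_lt] := midf_lt d_gt0.
by exists ((0 + d) / 2); apply: Pd.
Qed.

Lemma near0_all (T : eqType) (P : T -> R -> Prop) (s : seq T) :
  (forall y, y \in s -> near0 (P y)) ->
  near0 (fun e => forall y, y \in s -> P y e).
Proof.
elim: s => [|x s IH] Ps; first by exists 1; split.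
have [|d [d_gt0 Pd]] := near0_and (Ps x (mem_head _ _)) (IH _).
  by move=> y ys; apply: Ps; rewrite inE ys orbT.
exists d; split=> // e e_gt0 e_lt y; have [Px Ps'] := Pd e e_gt0 e_lt.
by rewrite inE => /orP[/eqP ->|/Ps'].
Qed.
End NearZero.

Section Lexicographic.
Variables (R : realFieldType) (m : nat).
Implicit Types u v : 'cV[R]_m.

Lemma first_nonzero v : v != 0 -> exists k : 'I_m,
  v k ord0 != 0 /\ forall j : 'I_m, (j < k)%N -> v j ord0 = 0.
Proof.
move=> v_nz; case: (pickP (fun k : 'I_m => v k ord0 != 0)) => [k0 nz0|all0].
  have [k nzk mink] := @arg_minnP _ k0 (fun k : 'I_m => v k ord0 != 0) val nz0.
  exists k; split=> // j jk; apply/eqP; apply: contraTT jk => /mink.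
  by rewrite -leqNgt.
case/eqP: v_nz; apply/matrixP => k j; rewrite ord1 mxE.
by move/negbFE/eqP: (all0 k).
Qed.

Lemma lexposP v : lexpos v <-> exists k : 'I_m,
  0 < v k ord0 /\ forall j : 'I_m, (j < k)%N -> v j ord0 = 0.
Proof.
split=> [[v_nz first_pos]|[k [vk_gt0 vj0]]].
  by have [k [vk vj0]] := first_nonzero v_nz; exists k; split=> //; apply: first_pos.
split=> [|k' vk' vj0'].
  by apply/negP => /eqP v0; move: vk_gt0; rewrite v0 mxE ltxx.
case: (ltngtP k' k) => [k'k|kk'|/val_inj -> //].
- by move: vk'; rewrite vj0 // eqxx.
- by move: vk_gt0; rewrite vj0' // ltxx.
Qed.

Lemma lexposD u v : lexpos u -> lexpos v -> lexpos (u + v).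
Proof.
move=> /lexposP [k1 [u1 u0]] /lexposP [k2 [v2 v0]]; apply/lexposP.
case: (ltngtP k1 k2) => [k12|k21|/val_inj k12].
- exists k1; split=> [|j jk]; first by rewrite mxE v0 // addr0.
  by rewrite mxE u0 // v0 ?addr0 // (ltn_trans jk k12).
- exists k2; split=> [|j jk]; first by rewrite mxE u0 // add0r.
  by rewrite mxE u0 ?v0 ?addr0 // (ltn_trans jk k21).
- subst k2; exists k1; split=> [|j jk]; first by rewrite mxE addr_gt0.
  by rewrite mxE u0 ?v0 ?addr0.
Qed.

Lemma lexposZ c v : 0 < c -> lexpos v -> lexpos (c *: v).
Proof.
move=> c_gt0 /lexposP [k [vk v0]]; apply/lexposP; exists k.
by split=> [|j jk]; rewrite mxE ?mulr_gt0 // v0 ?mulr0.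
Qed.

Lemma lexpos_trichotomy v : v = 0 \/ lexpos v \/ lexpos (- v).
Proof.
have [->|v_nz] := eqVneq v 0; [by left | right].
have [k [vk v0]] := first_nonzero v_nz.
case: (ltrgtP (v k ord0) 0) => [vk_lt0|vk_gt0|vk0]; last by rewrite vk0 eqxx in vk.
- right; apply/lexposP; exists k.
  by split=> [|j jk]; rewrite mxE ?oppr_gt0 // v0 ?oppr0.
- by left; apply/lexposP; exists k.
Qed.

Lemma lexge_trans u v w : lexge u v -> lexge v w -> lexge u w.
Proof.
case=> [->|uv] [<-|vw]; [by left | by right | by right |].
by right; rewrite -(subrK v u) -addrA; apply: lexposD.
Qed.

Lemma lexge_total u v : lexge u v \/ lexge v u.
Proof.
case: (lexpos_trichotomy (u - v)) => [/eqP|[uv|vu]].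
- by rewrite subr_eq0 => /eqP ->; left; left.
- by left; right.
- by right; right; rewrite opprB in vu.
Qed.

Lemma lexge_lexpos u v : lexge u v -> lexpos v -> lexpos u.
Proof. by case=> [-> //|uv vpos]; rewrite -(subrK v u); apply: lexposD. Qed.

Definition lexpoly v (e : R) : R := \sum_(l < m) v l ord0 * e ^+ l.

Lemma lexpolyN v e : lexpoly (- v) e = - lexpoly v e.
Proof. by rewrite /lexpoly -sumrN; apply: eq_bigr => l _; rewrite mxE mulNr. Qed.

Lemma lexpoly0 e : lexpoly 0 e = 0.
Proof. by rewrite /lexpoly big1 // => l _; rewrite mxE mul0r. Qed.

Lemma lexpoly_tail_bound v (k : 'I_m) e :
  (forall j : 'I_m, (j < k)%N -> v j ord0 = 0) -> 0 < e -> e <= 1 ->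
  - ((\sum_(l < m) `|v l ord0|) * e ^+ k.+1)
    <= \sum_(l < m | l != k) v l ord0 * e ^+ l.
Proof.
move=> v0 e_gt0 e_le1; have e_ge0 := ltW e_gt0.
apply: le_trans (_ : \sum_(l < m | l != k) - (`|v l ord0| * e ^+ k.+1) <= _).
  rewrite sumrN lerN2 -mulr_suml ler_wpM2r ?exprn_ge0 //.
  by rewrite [X in _ <= X](bigD1 k) //= lerDr.
apply: ler_sum => l lk; case: (ltngtP l k) => [lk'|kl|/val_inj lk'].
- by rewrite v0 // mul0r oppr_le0 mulr_ge0 ?exprn_ge0.
- apply: le_trans (_ : - (`|v l ord0| * e ^+ l) <= _).
    by rewrite lerN2 ler_wpM2l // ler_wiXn2l.
  by rewrite -mulNr ler_wpM2r ?exprn_ge0 // lerNnormlW.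
- by rewrite lk' eqxx in lk.
Qed.

Lemma lexpos_near0 v : lexpos v -> near0 (fun e => 0 < lexpoly v e).
Proof.
move=> /lexposP [k [vk_gt0 v0]]; set S := \sum_(l < m) `|v l ord0|.
have S1_gt0 : 0 < S + 1 by rewrite ltr_wpDl ?sumr_ge0.
exists (Num.min 1 (v k ord0 / (S + 1))); split; first by rewrite lt_min ltr01 divr_gt0.
move=> e e_gt0; rewrite lt_min => /andP[e_lt1 e_small].
have eS : e * S < v k ord0.
  apply: le_lt_trans (_ : e * (S + 1) < _); last by rewrite -ltr_pdivlMr.
  by apply: ler_wpM2l; [exact: ltW | rewrite lerDl].
rewrite /lexpoly (bigD1 k) //=.
apply: lt_le_trans (_ : 0 < v k ord0 * e ^+ k - S * e ^+ k.+1) _.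
  by rewrite exprS mulrA -mulrBl mulr_gt0 ?exprn_gt0 // subr_gt0 mulrC.
by rewrite lerD2l lexpoly_tail_bound ?ltW.
Qed.

Lemma near0_lexpos v : near0 (fun e => 0 < lexpoly v e) -> lexpos v.
Proof.
move=> vpos; case: (lexpos_trichotomy v) => [v0|[//|vneg]].
  by have [e] := near0_witness vpos; rewrite v0 lexpoly0 ltxx.
have [e [pos neg]] := near0_witness (near0_and vpos (lexpos_near0 vneg)).
by move: neg; rewrite lexpolyN oppr_gt0 => /(lt_trans pos); rewrite ltxx.
Qed.
End Lexicographic.

Section Dot.
Variables (R : realFieldType) (N : nat).
Implicit Types u y z : 'cV[R]_N.

Definition dot u y : R := \sum_j u j ord0 * y j ord0.

Lemma dotD u y z : dot u (y + z) = dot u y + dot u z.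
Proof. by rewrite /dot -big_split; apply: eq_bigr => j _; rewrite mxE mulrDr. Qed.

Lemma dotZ u lam y : dot u (lam *: y) = lam * dot u y.
Proof. by rewrite /dot mulr_sumr; apply: eq_bigr => j _; rewrite mxE mulrCA. Qed.

Lemma dotr0 u : dot u 0 = 0.
Proof. by rewrite /dot big1 // => j _; rewrite mxE mulr0. Qed.

Lemma dotN u y : dot u (- y) = - dot u y.
Proof. by rewrite /dot -sumrN; apply: eq_bigr => j _; rewrite mxE mulrN. Qed.

Lemma dotNl u y : dot (- u) y = - dot u y.
Proof. by rewrite /dot -sumrN; apply: eq_bigr => j _; rewrite mxE mulNr. Qed.
End Dot.

Lemma seq_least (T : eqType) (le : T -> T -> Prop) (s : seq T) :
  (forall x y z, le x y -> le y z -> le x z) -> (forall x y, le x y \/ le y x) ->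
  s != [::] -> exists2 x, x \in s & forall y, y \in s -> le x y.
Proof.
move=> le_trans le_total; elim: s => [//|x s IH] _.
have le_refl : le x x by case: (le_total x x).
have [->|s_nz] := eqVneq s [::].
  by exists x => [|y]; rewrite ?mem_head // inE => /eqP ->.
have [z zs zmin] := IH s_nz; case: (le_total x z) => [xz|zx].
  exists x => [|y]; first exact: mem_head.
  by rewrite inE => /orP[/eqP ->|/zmin]; last exact: le_trans.
by exists z => [|y]; rewrite ?inE ?zs ?orbT // => /orP[/eqP ->|/zmin].
Qed.

Section Vertices.
Variables (R : realFieldType) (N : nat) (I J : finType).
Variables (a : I -> 'cV[R]_N) (b : I -> R) (c : J -> 'cV[R]_N) (e : J -> R).

Definition feas y := (forall k, dot (a k) y <= b k) /\ (forall k, dot (c k) y = e k).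

Definition active y : {set I} := [set k | dot (a k) y == b k].

Definition basic y := feas y /\ forall r,
  (forall k, k \in active y -> dot (a k) r = 0) -> (forall k, dot (c k) r = 0) -> r = 0.

(* The polyhedron is bounded: its recession cone is trivial. *)
Hypothesis bounded : forall r,
  (forall k, dot (a k) r <= 0) -> (forall k, dot (c k) r = 0) -> r = 0.

Lemma basic_uniq y y' : basic y -> basic y' -> active y = active y' -> y = y'.
Proof.
move=> [[_ ye] ybasic] [[_ y'e] _] act_eq; apply/eqP; rewrite -subr_eq0; apply/eqP.
apply: ybasic => [k kact|k]; last by rewrite dotD dotN ye y'e subrr.
have kact' : k \in active y' by rewrite -act_eq.
by move: kact kact'; rewrite !inE dotD dotN => /eqP -> /eqP ->; rewrite subrr.
Qed.

(* A basic point is determined by its active set, so there are finitely many. *)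
Lemma basic_finite : exists s : seq 'cV[R]_N,
  forall y, basic y <-> y \in s.
Proof.
suff [s sP] : exists s : seq 'cV[R]_N, (forall y, basic y -> y \in s) /\
                                      (forall y, y \in s -> basic y).
  by exists s => y; split; [apply: sP.1 | apply: sP.2].
suff sets : forall X : seq {set I}, exists s : seq 'cV[R]_N,
    (forall y, basic y -> active y \in X -> y \in s) /\ (forall y, y \in s -> basic y).
  have [s [s_basic s_in]] := sets (enum {set I}).
  by exists s; split=> // y /s_basic; apply; rewrite mem_enum.
elim=> [|A X [s [s_basic s_in]]]; first by exists [::].
case: (classic (exists y, basic y /\ active y = A)) => [[y0 [b0 a0]]|noA].
  exists (y0 :: s); split=> [y y_basic|y]; last by rewrite inE => /orP[/eqP ->|/s_in].
  rewrite !inE => /orP[/eqP actA|yX]; last by rewrite s_basic ?orbT.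
  by rewrite (basic_uniq y_basic b0 (etrans actA (esym a0))) eqxx.
exists s; split=> // y y_basic; rewrite inE => /orP[/eqP actA|]; last exact: s_basic.
by case: noA; exists y.
Qed.

(* A preorder that, on every line through every point, decreases (weakly)
   in one of the two directions: linear objectives and the lexicographic
   preorder induced by a linear map are examples. *)
Variable prec : 'cV[R]_N -> 'cV[R]_N -> Prop.
Hypothesis prec_trans : forall x y z, prec x y -> prec y z -> prec x z.
Hypothesis prec_total : forall x y, prec x y \/ prec y x.
Hypothesis prec_lines : forall y r, exists2 r', r' = r \/ r' = - r &
  forall lam, 0 <= lam -> prec (y + lam *: r') y.

Lemma prec_refl y : prec y y.
Proof. by case: (prec_total y y). Qed.

Lemma vertex_step y : ~ basic y -> feas y ->
  exists y', [/\ feas y', active y \proper active y' & prec y' y].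
Proof.
move=> nbasic [y_le y_eq].
have [r [r_act r_eq r_nz]] : exists r, [/\ forall k, k \in active y -> dot (a k) r = 0,
    forall k, dot (c k) r = 0 & r <> 0].
  apply: NNPP => nor; apply: nbasic; split=> // r ract req.
  by apply: NNPP => rnz; apply: nor; exists r.
have [r' r'r descent] := prec_lines y r.
have r'_act k : k \in active y -> dot (a k) r' = 0.
  by move=> kact; case: r'r => ->; rewrite ?dotN r_act ?oppr0.
have r'_eq k : dot (c k) r' = 0 by case: r'r => ->; rewrite ?dotN r_eq ?oppr0.
have [k0 k0_pos] : exists k, 0 < dot (a k) r'.
  apply: NNPP => nopos; apply: r_nz.
  suff r'0 : r' = 0 by case: r'r r'0 => -> // /eqP; rewrite oppr_eq0 => /eqP.
  apply: bounded => // k; rewrite leNgt; apply/negP => kpos; apply: nopos.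
  by exists k.
pose step k := (b k - dot (a k) y) / dot (a k) r'.
have [ks ks_pos step_min] :=
  @arg_minP _ _ _ k0 (fun k => 0 < dot (a k) r') step k0_pos.
have step_ge0 : 0 <= step ks by rewrite divr_ge0 ?subr_ge0 ?y_le ?ltW.
exists (y + step ks *: r'); split; last exact: descent.
- split=> k; rewrite dotD dotZ; last by rewrite r'_eq mulr0 addr0.
  case: (lerP (dot (a k) r') 0) => ak.
    by rewrite -[b k]addr0 lerD ?mulr_ge0_le0.
  by rewrite -lerBrDl -ler_pdivlMr //; apply: step_min.
- apply/properP; split.
    apply/subsetP => k kact; rewrite inE dotD dotZ r'_act // mulr0 addr0.
    by move: kact; rewrite inE.
  exists ks; first by rewrite inE dotD dotZ /step divfK ?subrKC // gt_eqF.
  by apply/negP => /r'_act ks0; rewrite ks0 ltxx in ks_pos.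
Qed.

Lemma vertex_below y : feas y -> exists2 y', basic y' & prec y' y.
Proof.
move=> feas_y; have [k] := ubnP #|~: active y|.
elim: k y feas_y => // k IH y feas_y lt_k.
case: (classic (basic y)) => [basic_y|nbasic]; first by exists y => //; apply: prec_refl.
have [y' [feas_y' more_act le_y'y]] := vertex_step nbasic feas_y.
have [|y'' basic_y'' le_y''y'] := IH y' feas_y'.
  rewrite -properC in more_act; rewrite -ltnS; apply: leq_trans lt_k.
  by rewrite ltnS proper_card.
by exists y''; last exact: prec_trans le_y''y' le_y'y.
Qed.

Lemma basic_minimizer : (exists y, feas y) ->
  exists2 ym, basic ym & forall y, feas y -> prec ym y.
Proof.
move=> [y0 feas_y0]; have [s sP] := basic_finite.
have [|ym ym_s ym_min] := seq_least prec_trans prec_total (s := s).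
  by have [y1 /sP y1s _] := vertex_below feas_y0; apply/eqP => s0; rewrite s0 in y1s.
exists ym => [|y /vertex_below [y' /sP y's le_y'y]]; first exact/sP.
exact: prec_trans (ym_min _ y's) le_y'y.
Qed.
End Vertices.

Section LexicographicLP.
Variables (R : realFieldType) (n d : nat) (beta : 'M[R]_n) (Q : 'M[R]_(n, d)).
Variables (q : 'cV[R]_n) (i : 'I_n).

Local Notation F := (Fset beta Q i).
Local Notation tfeas := (tfeas beta Q q i).

Definition cost (e : R) : 'cV[R]_n := beta *m (q + epsvec n e).

Definition lexcost : 'M[R]_(1 + n, n) := (beta *m row_mx q 1%:M)^T.

Lemma row_mul_entry m p (A : 'M[R]_(m, p)) (B : 'cV[R]_p) k :
  (A *m B) k ord0 = (row k A *m B) ord0 ord0.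
Proof. by rewrite -row_mul [RHS]mxE. Qed.

Lemma lexpoly_lexcost e y : lexpoly (lexcost *m y) e = dot (cost e) y.
Proof.
have powers : \col_(l < 1 + n) e ^+ l = col_mx (1%:M : 'M[R]_1) (epsvec n e).
  apply/matrixP => l j; rewrite !mxE ord1; case: splitP => k ->.
    by rewrite ord1 !mxE eqxx.
  by rewrite mxE.
have -> : lexpoly (lexcost *m y) e = ((lexcost *m y)^T *m \col_(l < 1 + n) e ^+ l)
    ord0 ord0.
  by rewrite /lexpoly [RHS]mxE; apply: eq_bigr => l _; rewrite !mxE.
rewrite powers /lexcost trmx_mul trmxK -!mulmxA mul_row_col mulmx1 mul1mx -/(cost e).
by rewrite mxE; apply: eq_bigr => p _; rewrite mxE mulrC.
Qed.

Lemma Fset_orth y (theta : 'cV[R]_d) : F y ->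
  \sum_p y p ord0 * (row p beta *m Q *m theta) ord0 ord0 = 0.
Proof.
move=> [yQ _]; have : (y^T *m (beta *m Q *m theta)) ord0 ord0 = 0.
  have -> : y^T *m (beta *m Q *m theta) = (Q^T *m beta^T *m y)^T *m theta.
    by rewrite !trmx_mul !trmxK !mulmxA.
  by rewrite yQ trmx0 mul0mx mxE.
move=> orth; rewrite -[RHS]orth mxE; apply: eq_bigr => p _.
by rewrite [y^T _ _]mxE [in RHS]row_mul_entry row_mul.
Qed.

Lemma tfeas_le_cost e y t : F y -> tfeas e t -> t <= dot (cost e) y.
Proof.
move=> Fy [theta [t_le t_eq]]; have [_ [y_sum y_ge0]] := Fy.
pose w p := (row p beta *m Q *m theta) ord0 ord0.
pose g p := (row p beta *m (q + epsvec n e)) ord0 ord0.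
have -> : dot (cost e) y = \sum_p y p ord0 * (g p + w p).
  under [RHS]eq_bigr do rewrite mulrDr.
  rewrite big_split /= Fset_orth // addr0.
  by apply: eq_bigr => p _; rewrite mulrC /cost row_mul_entry.
rewrite (bigD1 i) //=.
have -> : g i + w i = 0 by rewrite /g -t_eq addrC subrr.
rewrite mulr0 add0r -[t]mulr1 -y_sum mulr_sumr.
apply: ler_sum => p pi; rewrite mulrC ler_wpM2l ?y_ge0 //.
by rewrite -lerBlDr addrC; apply: t_le.
Qed.

(* F(i) as a polyhedron: -y_j <= 0 for j != i, Q^T beta^T y = 0 and
   sum_(j != i) y_j = 1. *)
Definition F_ineq (j : 'I_n) : 'cV[R]_n := if j != i then - \col_p (p == j)%:R else 0.

Definition F_eq (k : option 'I_d) : 'cV[R]_n :=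
  if k is Some l then \col_p (Q^T *m beta^T) l p else \col_p (p != i)%:R.

Definition F_rhs (k : option 'I_d) : R := if k is None then 1 else 0.

Local Notation Fpoly := (feas F_ineq (fun=> 0) F_eq F_rhs).

Lemma dot_F_ineq j y : dot (F_ineq j) y = if j != i then - y j ord0 else 0.
Proof.
rewrite /F_ineq; case: ifP => _; last by rewrite /dot big1 // => p _; rewrite mxE mul0r.
rewrite dotNl /dot (bigD1 j) //= mxE eqxx mul1r big1 ?addr0 // => p /negbTE pj.
by rewrite mxE pj mul0r.
Qed.

Lemma dot_F_eq k y : dot (F_eq k) y =
  if k is Some l then (Q^T *m beta^T *m y) l ord0 else \sum_(p | p != i) y p ord0.
Proof.
case: k => [l|]; first by rewrite /dot [RHS]mxE; apply: eq_bigr => p _; rewrite mxE.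
rewrite /dot [RHS]big_mkcond; apply: eq_bigr => p _ /=; rewrite mxE.
by case: (p != i); rewrite ?mul1r ?mul0r.
Qed.

Lemma Fset_feas y : F y <-> Fpoly y.
Proof.
split=> [[yQ [y_sum y_ge0]]|[y_ineq y_eq]].
  split=> [j|[l|]]; rewrite ?dot_F_ineq ?dot_F_eq //; last by rewrite yQ mxE.
  by case: ifP => // ji; rewrite oppr_le0 y_ge0 ?ji.
split; last split.
- by apply/matrixP => l j; rewrite ord1 [RHS]mxE; have := y_eq (Some l); rewrite dot_F_eq.
- by have := y_eq None; rewrite dot_F_eq.
- by move=> j ji; have := y_ineq j; rewrite dot_F_ineq ji oppr_le0.
Qed.

Hypothesis beta_iQ : row i beta *m Q != 0.

Lemma supported_at_i_zero (r : 'cV[R]_n) : (forall p, p != i -> r p ord0 = 0) ->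
  Q^T *m beta^T *m r = 0 -> r = 0.
Proof.
move=> r0 rQ; have [|l [nz_l _]] := first_nonzero (v := (row i beta *m Q)^T).
  by rewrite trmx_eq0.
have ri : r i ord0 = 0.
  apply/eqP; move/matrixP: rQ => /(_ l ord0); rewrite !mxE (bigD1 i) //=.
  rewrite big1 => [|p /r0 ->]; last by rewrite mulr0.
  rewrite addr0 -trmx_mul mxE => /eqP; rewrite mulf_eq0 => /orP[|//].
  by move: nz_l; rewrite mxE -row_mul mxE => /negbTE ->.
apply/matrixP => p j; rewrite ord1 mxE.
by have [->|/r0] := eqVneq p i.
Qed.

Lemma F_bounded r : (forall j, dot (F_ineq j) r <= 0) ->
  (forall k, dot (F_eq k) r = 0) -> r = 0.
Proof.
move=> r_ineq r_eq; have r_ge0 p : p != i -> 0 <= r p ord0.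
  by move=> pi; have := r_ineq p; rewrite dot_F_ineq pi oppr_le0.
apply: supported_at_i_zero => [p pi|].
  by apply: (psumr_eq0P r_ge0) pi; have := r_eq None; rewrite dot_F_eq.
by apply/matrixP => l j; rewrite ord1 [RHS]mxE; have := r_eq (Some l); rewrite dot_F_eq.
Qed.

(* Strong duality.  "t = m is feasible" is the system, in the d unknowns
   theta, made of  -beta_p Q theta <= cost_p - m  for p != i  and of the
   equality  -beta_i Q theta = cost_i  split into two inequalities; its rows
   are indexed by 'I_n + bool.  [split_row f] places the values f p of a row
   vector in this layout. *)
Definition split_row (f : 'I_n -> R) (k : 'I_n + bool) : R :=
  match k with
  | inl p => if p != i then f p else 0
  | inr true => f i
  | inr false => - f i
  end.

Definition tsys_a (k : 'I_n + bool) (l : nat) : R :=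
  split_row (fun p => if insub l is Some o then - (beta *m Q) p o else 0) k.

Definition tsys_b (e m : R) (k : 'I_n + bool) : R :=
  split_row (fun p => cost e p ord0) k - m * split_row (fun p => (p != i)%:R) k.

Definition fold_mult (lam : 'I_n + bool -> R) : 'cV[R]_n :=
  \col_p (if p != i then lam (inl p) else lam (inr true) - lam (inr false)).

Lemma split_row_sum lam f :
  \sum_k lam k * split_row f k = \sum_p fold_mult lam p ord0 * f p.
Proof.
rewrite big_sumType big_bool /= [RHS](bigD1 i) //= [X in X + _ = _](bigD1 i) //=.
rewrite eqxx mulr0 add0r mxE eqxx /= mulrN mulrBl [RHS]addrC; congr (_ + _).
by apply: eq_bigr => p pi; rewrite mxE pi.
Qed.

Lemma split_row_sumr (f : 'I_n -> 'I_d -> R) (x : nat -> R) k :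
  \sum_(l < d) split_row (f^~ l) k * x l = split_row (fun p => \sum_l f p l * x l) k.
Proof.
case: k => [p|[]] /=; last by rewrite -sumrN; apply: eq_bigr => l _; rewrite mulNr.
  by case: ifP => // _; rewrite big1 // => l _; rewrite mul0r.
by [].
Qed.

Lemma tsys_feasible e m : lin_feasible d tsys_a (tsys_b e m) -> tfeas e m.
Proof.
case=> x x_sol; pose theta : 'cV[R]_d := \col_(l < d) x l.
pose w p := (row p beta *m Q *m theta) ord0 ord0.
have w_sum p : \sum_(l < d) - (beta *m Q) p l * x l = - w p.
  rewrite /w -row_mul mxE -sumrN; apply: eq_bigr => l _.
  by rewrite !mxE mulNr.
have lhs k : \sum_(l < d) tsys_a k l * x l = split_row (fun p => - w p) k.
  under eq_bigr => l _ do rewrite /tsys_a valK.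
  by rewrite (split_row_sumr (fun p l => - (beta *m Q) p l)); case: k => [p|[]] /=;
    rewrite ?w_sum.
exists theta; split=> [p pi|].
  have := x_sol (inl p).
  by rewrite lhs /tsys_b /= pi mulr1 lerBrDr /cost row_mul_entry.
apply/eqP; rewrite eq_le; apply/andP; split.
  have := x_sol (inr true).
  by rewrite lhs /tsys_b /= eqxx mulr0 subr0 /cost row_mul_entry.
have := x_sol (inr false).
by rewrite lhs /tsys_b /= eqxx oppr0 mulr0 subr0 /cost row_mul_entry lerN2.
Qed.

(* A Farkas certificate against "t = m" yields a point of F(i) of cost < m:
   its folded multipliers, normalized; they cannot sum to zero off i, since
   then they would vanish altogether. *)
Lemma tsys_certificate e m : farkas_certificate d tsys_a (tsys_b e m) ->
  exists2 y, F y & dot (cost e) y < m.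
Proof.
case=> lam [lam_ge0 [lam_a lam_b]]; set Y := fold_mult lam.
have YQ : Q^T *m beta^T *m Y = 0.
  apply/matrixP => l j; rewrite ord1 [RHS]mxE.
  have := lam_a l (ltn_ord l); rewrite /tsys_a split_row_sum => sum0.
  rewrite mxE -[X in _ = X]oppr0 -[X in _ = - X]sum0 -sumrN; apply: eq_bigr => p _.
  by rewrite valK -trmx_mul !mxE mulrN opprK mulrC.
have Y_ge0 p : p != i -> 0 <= Y p ord0 by move=> pi; rewrite mxE pi lam_ge0.
set s := \sum_(p | p != i) Y p ord0.
have Y_cost : \sum_k lam k * tsys_b e m k = dot (cost e) Y - m * s.
  under eq_bigr do rewrite mulrBr mulrCA; rewrite sumrB -mulr_sumr !split_row_sum.
  rewrite /s [in RHS]big_mkcond /=; congr (_ - m * _).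
    by apply: eq_bigr => p _; rewrite mulrC.
  by apply: eq_bigr => p _; case: (p != i); rewrite ?mulr1 ?mulr0.
have [s_gt0|s_le0] := ltrP 0 s.
  exists (s^-1 *: Y); last by rewrite dotZ mulrC ltr_pdivrMr // -subr_lt0 -Y_cost.
  split; last split.
  - by rewrite -scalemxAr YQ scaler0.
  - rewrite -(mulVf (lt0r_neq0 s_gt0)) /s mulr_sumr.
    by apply: eq_bigr => p _; rewrite !mxE.
  - move=> p pi; rewrite mxE mulr_ge0 ?Y_ge0 //.
    by rewrite invr_ge0 ltW.
have s0 : s = 0 by apply/le_anti; rewrite s_le0 sumr_ge0.
have Y0 : Y = 0 by apply: supported_at_i_zero => // p; apply: (psumr_eq0P Y_ge0).
by move: lam_b; rewrite Y_cost Y0 s0 dotr0 mulr0 subr0 ltxx.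
Qed.

Lemma cost_min_tfeas e ym : F ym ->
  (forall y, F y -> dot (cost e) ym <= dot (cost e) y) -> tfeas e (dot (cost e) ym).
Proof.
move=> Fym ym_min; case: (classic (lin_feasible d tsys_a (tsys_b e (dot (cost e) ym)))).
  exact: tsys_feasible.
move=> /farkas /tsys_certificate [y Fy lt_y].
by have := ym_min y Fy; rewrite leNgt lt_y.
Qed.

Lemma tstar_cost_min e ym : F ym ->
  (forall y, F y -> dot (cost e) ym <= dot (cost e) y) ->
  is_max (tfeas e) (dot (cost e) ym).
Proof.
move=> Fym ym_min; split; first exact: cost_min_tfeas.
by move=> t /(tfeas_le_cost Fym).
Qed.
End LexicographicLP.

Section LinearPreorders.
Variables (R : realFieldType) (N : nat).
Implicit Types y r : 'cV[R]_N.

Lemma cost_lines (g : 'cV[R]_N) y r : exists2 r', r' = r \/ r' = - r &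
  forall lam, 0 <= lam -> dot g (y + lam *: r') <= dot g y.
Proof.
have [gr_le0|gr_gt0] := lerP (dot g r) 0.
  by exists r => [|lam lam_ge0]; [left | rewrite dotD dotZ gerDl mulr_ge0_le0].
exists (- r) => [|lam lam_ge0]; first by right.
by rewrite dotD dotZ dotN gerDl mulr_ge0_le0 // oppr_le0 ltW.
Qed.

Lemma lex_lines m (C : 'M[R]_(m, N)) y r : exists2 r', r' = r \/ r' = - r &
  forall lam, 0 <= lam -> lexge (C *m y) (C *m (y + lam *: r')).
Proof.
have step r' lam : 0 <= lam -> lexpos (- (C *m r')) ->
    lexge (C *m y) (C *m (y + lam *: r')).
  rewrite le_eqVlt => /orP[/eqP <-|lam_gt0 Cr'].
    by left; rewrite scale0r addr0.
  right; rewrite mulmxDr -scalemxAr opprD addrA subrr add0r -scalerN.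
  exact: lexposZ.
case: (lexpos_trichotomy (C *m r)) => [Cr0|[Cr_pos|Cr_neg]].
- exists r => [|lam _]; first by left.
  by left; rewrite mulmxDr -scalemxAr Cr0 scaler0 addr0.
- by exists (- r) => [|lam /step]; [right | apply; rewrite mulmxN opprK].
- by exists r => [|lam /step]; [left | apply].
Qed.
End LinearPreorders.

Section LexicographicCriterion.
Variables (R : realFieldType) (n d : nat) (beta : 'M[R]_n) (Q : 'M[R]_(n, d)).
Variables (q : 'cV[R]_n) (i : 'I_n).
Hypothesis F_nonempty : exists y, Fset beta Q i y.
Hypothesis beta_iQ : row i beta *m Q != 0.

Local Notation F := (Fset beta Q i).
Local Notation Fbasic := (basic (@F_ineq R n i) (fun=> 0) (F_eq beta Q i) (@F_rhs R d)).
Local Notation lexcost := (lexcost beta q).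
Local Notation cost := (cost beta q).

Lemma F_feasible : exists y, feas (@F_ineq R n i) (fun=> 0) (F_eq beta Q i) (@F_rhs R d) y.
Proof. by have [y /Fset_feas] := F_nonempty; exists y. Qed.

Lemma Fbasic_F y : Fbasic y -> F y.
Proof. by case=> /Fset_feas. Qed.

Lemma cost_minimizer e : exists2 ym, Fbasic ym &
  forall y, F y -> dot (cost e) ym <= dot (cost e) y.
Proof.
pose prec x y := dot (cost e) x <= dot (cost e) y.
have prec_trans x y z : prec x y -> prec y z -> prec x z by apply: le_trans.
have prec_total x y : prec x y \/ prec y x by apply/orP/le_total.
have [ym ym_basic ym_min] :=
  basic_minimizer (F_bounded beta_iQ) prec_trans prec_total
    (cost_lines (cost e)) F_feasible.
by exists ym => // y /Fset_feas /ym_min.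
Qed.

Lemma lex_minimizer : exists2 ys, Fbasic ys &
  forall y, F y -> lexge (lexcost *m y) (lexcost *m ys).
Proof.
pose prec x y := lexge (lexcost *m y) (lexcost *m x).
have prec_trans x y z : prec x y -> prec y z -> prec x z.
  by move=> xy yz; apply: lexge_trans yz xy.
have prec_total x y : prec x y \/ prec y x.
  by case: (lexge_total (lexcost *m y) (lexcost *m x)); [left | right].
have [ys ys_basic ys_min] :=
  basic_minimizer (F_bounded beta_iQ) prec_trans prec_total
    (lex_lines lexcost) F_feasible.
by exists ys => // y /Fset_feas /ys_min.
Qed.

Lemma Tset_lexmin ys : F ys ->
  (forall y, F y -> lexge (lexcost *m y) (lexcost *m ys)) ->
  is_lexmin (Tset beta Q q i) (lexcost *m ys).
Proof.
by move=> Fys ys_min; split=> [|_ [y [Fy ->]]]; [exists ys | apply: ys_min].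
Qed.

(* If t*(e) > 0 for small e > 0, then the cost vector of any y in F(i), whose
   polynomial bounds t*(e) from above by weak duality, is lexico-positive. *)
Lemma tstar_pos_lexpos y : F y ->
  near0 (fun e => exists tstar, is_max (tfeas beta Q q i e) tstar /\ 0 < tstar) ->
  lexpos (lexcost *m y).
Proof.
move=> Fy [delta [delta_gt0 tstar_pos]]; apply: near0_lexpos.
exists delta; split=> // e e_gt0 e_lt; have [t [[t_feas _] t_gt0]] := tstar_pos e e_gt0 e_lt.
by rewrite lexpoly_lexcost; apply: lt_le_trans t_gt0 (tfeas_le_cost Fy t_feas).
Qed.

(* Conversely, if the cost vectors of the finitely many basic points are all
   lexico-positive, then t*(e), the cost of one of them, is positive for small e. *)
Lemma lexpos_tstar_pos : (forall y, Fbasic y -> lexpos (lexcost *m y)) ->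
  near0 (fun e => exists tstar, is_max (tfeas beta Q q i e) tstar /\ 0 < tstar).
Proof.
move=> basic_pos; have [s sP] := basic_finite (@F_ineq R n i) (fun=> 0) (F_eq beta Q i) (@F_rhs R d).
have [|delta [delta_gt0 all_pos]] := near0_all (P := fun y e => 0 < lexpoly (lexcost *m y) e) (s := s).
  by move=> y /sP /basic_pos; apply: lexpos_near0.
exists delta; split=> // e e_gt0 e_lt; have [ym /[dup] ym_basic /sP ym_s ym_min] := cost_minimizer e.
exists (dot (cost e) ym); split; first exact: tstar_cost_min (Fbasic_F ym_basic) ym_min.
by rewrite -lexpoly_lexcost; apply: all_pos.
Qed.
End LexicographicCriterion.

(* Theorem 12. *)
Theorem mainTheorem12 (R : realFieldType) (n d : nat) (M : 'M[R]_n)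
  (b : 'I_n -> 'I_(n + n)) (i : 'I_n) (Q : 'M[R]_(n, d)) (q : 'cV[R]_n) :
  compl_basis M b ->
  (exists y, Fset (betaB M b) Q i y) ->
  row i (betaB M b) *m Q != 0 ->
  exists Tstar : 'cV[R]_(1 + n),
    is_lexmin (Tset (betaB M b) Q q i) Tstar /\
    ((exists delta : R, 0 < delta /\
        forall e : R, 0 < e -> e < delta ->
          exists tstar, is_max (tfeas (betaB M b) Q q i e) tstar /\ 0 < tstar)
     <-> lexpos Tstar).
Proof.
move=> _ F_nonempty beta_iQ.
have [ys ys_basic ys_min] := lex_minimizer q F_nonempty beta_iQ.
have Fys := Fbasic_F ys_basic.
exists (lexcost (betaB M b) q *m ys); split; first exact: Tset_lexmin.
split; first exact: tstar_pos_lexpos.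
move=> T_pos; apply: lexpos_tstar_pos => // y /Fbasic_F Fy.
exact: lexge_lexpos (ys_min y Fy) T_pos.
Qed.
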